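(* Let $A$ be a linear endomorphism of $\mathbb{E}^n$, $\mathbf{b}$ an orthonormal basis, $u\in\mathbb{E}^n$ non-zero and $\hat u=u/\|u\|$. Then $$A^{\mathrm{sym}}(u)=\mathbf{A}^e(\hat u)\,u+\tfrac12\sum_{k<l}\big([A,R_{kl}](\hat u)\cdot\hat u\big)R_{kl}(u),\qquad A^{\mathrm{skew}}(u)=-\tfrac12\sum_{k<l}\big(\{A,R_{kl}\}(\hat u)\cdot\hat u\big)R_{kl}(u),$$ where $[X,Y]=XY-YX$ and $\{X,Y\}=XY+YX$.
   Context: $\mathbb{E}^n$ is $\mathbb{R}^n$ with the standard inner product; $A^*$ is the adjoint of $A$, $A^{\mathrm{sym}}=\frac12(A+A^* )$, $A^{\mathrm{skew}}=\frac12(A-A^* )$. For an orthonormal basis $\mathbf{b}=\{b_1,\dots,b_n\}$ and $1\le k<l\le n$, $R_{kl}$ is the linear map with $R_{kl}(b_k)=b_l$, $R_{kl}(b_l)=-b_k$, $R_{kl}(b_m)=0$ for $m\ne k,l$. The expansion form is $\mathbf{A}^e(u):=A(u)\cdot u$. *)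

(* E^n is modelled as column vectors 'cV[R]_n over a real
   closed field R (covers the reals); linear endomorphisms as n x n matrices
   acting on the left (u |-> A *m u), so the adjoint is the transpose. *)
From mathcomp Require Import all_boot all_order all_algebra.
Set Implicit Arguments. Unset Strict Implicit. Unset Printing Implicit Defensive.
Import Order.TTheory GRing.Theory Num.Theory.
Local Open Scope ring_scope.

Definition dotv {R : rcfType} {n : nat} (u v : 'cV[R]_n) : R := (u^T *m v) 0 0.

Definition normv {R : rcfType} {n : nat} (u : 'cV[R]_n) : R := Num.sqrt (dotv u u).

Definition adj {R : rcfType} {n : nat} (A : 'M[R]_n) : 'M[R]_n := A^T.
Definition symp {R : rcfType} {n : nat} (A : 'M[R]_n) : 'M[R]_n := 2^-1 *: (A + adj A).
Definition skewp {R : rcfType} {n : nat} (A : 'M[R]_n) : 'M[R]_n := 2^-1 *: (A - adj A).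

Definition expform {R : rcfType} {n : nat} (A : 'M[R]_n) (u : 'cV[R]_n) : R :=
  dotv (A *m u) u.

Definition comm_mx' {R : rcfType} {n : nat} (X Y : 'M[R]_n) : 'M[R]_n := X *m Y - Y *m X.
Definition acomm_mx {R : rcfType} {n : nat} (X Y : 'M[R]_n) : 'M[R]_n := X *m Y + Y *m X.

(* orthonormal basis: n vectors, pairwise orthonormal (hence a basis of E^n) *)
Definition orthonormal_basis {R : rcfType} {n : nat} (b : 'I_n -> 'cV[R]_n) : Prop :=
  forall i j, dotv (b i) (b j) = (i == j)%:R.

Definition is_Rkl {R : rcfType} {n : nat} (b : 'I_n -> 'cV[R]_n) (k l : 'I_n)
    (M : 'M[R]_n) : Prop :=
  [/\ M *m b k = b l, M *m b l = - b k &
      forall m, m != k -> m != l -> M *m b m = 0].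

From mathcomp Require Import all_boot all_order all_algebra.
From mathcomp Require Import ring.
Set Implicit Arguments. Unset Strict Implicit. Unset Printing Implicit Defensive.
Import Order.TTheory GRing.Theory Num.Theory.
Local Open Scope ring_scope.

(* For an orthonormal basis b put x_k := b_k . x.  The maps
   R_kl are forced to be rot k l = b_l b_k^T - b_k b_l^T, so
   R_kl(x) . y = x_k y_l - x_l y_k, and a direct expansion with Parseval's
   identity gives the Lagrange-type identity
        sum_(k<l) (R_kl(x) . y) R_kl(x) = |x|^2 y - (x . y) x,
   i.e. the R_kl(x) span the complement of x with the right weights.
   Applied to y = A^sym(x) and y = A^skew(x) this decomposes both parts of A
   along x and the R_kl(x).  Since every R_kl is skew, the coefficients are
        R_kl(x) . A^sym(x)  =  1/2 [A,R_kl](x) . x,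
        R_kl(x) . A^skew(x) = -1/2 {A,R_kl}(x) . x,
   while x . A^sym(x) = A^e(x) and x . A^skew(x) = 0.  Taking x = u^ a unit
   vector and multiplying by |u| (all maps are linear, the coefficients stay
   those at u^) gives the statement at u = |u| u^. *)

Section InnerProduct.
Variables (R : rcfType) (n : nat).
Implicit Types (x y z : 'cV[R]_n) (M : 'M[R]_n).

Lemma dotvE x y : dotv x y = \sum_i x i 0 * y i 0.
Proof. by rewrite /dotv mxE; apply: eq_bigr => i _; rewrite mxE. Qed.

Lemma dotvC x y : dotv x y = dotv y x.
Proof. by rewrite !dotvE; apply: eq_bigr => i _; rewrite mulrC. Qed.

Lemma dotvDr x y z : dotv x (y + z) = dotv x y + dotv x z.
Proof. by rewrite /dotv mulmxDr mxE. Qed.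

Lemma dotvZr a x y : dotv x (a *: y) = a * dotv x y.
Proof. by rewrite /dotv -scalemxAr mxE. Qed.

Lemma dotvNr x y : dotv x (- y) = - dotv x y.
Proof. by rewrite -scaleN1r dotvZr mulN1r. Qed.

Lemma dotvBr x y z : dotv x (y - z) = dotv x y - dotv x z.
Proof. by rewrite dotvDr dotvNr. Qed.

Lemma dotv_sumr x (I : Type) (r : seq I) (P : pred I) (F : I -> 'cV[R]_n) :
  dotv x (\sum_(i <- r | P i) F i) = \sum_(i <- r | P i) dotv x (F i).
Proof. by rewrite /dotv mulmx_sumr summxE. Qed.

Lemma dotvDl x y z : dotv (y + z) x = dotv y x + dotv z x.
Proof. by rewrite dotvC dotvDr !(dotvC x). Qed.

Lemma dotvBl x y z : dotv (y - z) x = dotv y x - dotv z x.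
Proof. by rewrite dotvC dotvBr !(dotvC x). Qed.

Lemma dotvZl a x y : dotv (a *: y) x = a * dotv y x.
Proof. by rewrite dotvC dotvZr dotvC. Qed.

Lemma dotv_trmx M x y : dotv (M *m x) y = dotv x (M^T *m y).
Proof. by rewrite /dotv trmx_mul mulmxA. Qed.

Lemma outer_mulmx x y z : x *m (y^T *m z) = dotv y z *: x.
Proof. by rewrite {1}[y^T *m z]mx11_scalar mul_mx_scalar. Qed.

Lemma dotv_gt0 x : x != 0 -> 0 < dotv x x.
Proof.
have sq_ge0 i : 0 <= x i 0 * x i 0 by rewrite -expr2 sqr_ge0.
move=> x_neq0; rewrite lt_def dotvE sumr_ge0 // andbT.
apply: contra x_neq0 => /eqP /psumr_eq0P x_sq0; apply/eqP/matrixP => i j.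
by rewrite (ord1 j) mxE; apply/eqP; rewrite -sqrf_eq0 expr2 x_sq0.
Qed.

Lemma dotv_skew M x : M^T = - M -> dotv x (M *m x) = 0.
Proof.
move=> MT; have : dotv x (M *m x) = - dotv x (M *m x).
  by rewrite {1}dotvC dotv_trmx MT mulNmx dotvNr.
by move/eqP; rewrite -addr_eq0 -mulr2n mulrn_eq0 /= => /eqP.
Qed.

End InnerProduct.

Lemma sum_lt_half (R : fieldType) (V : lmodType R) (n : nat)
    (F : 'I_n -> 'I_n -> V) :
  (2%:R : R) != 0 -> (forall k l, F k l = F l k) -> (forall k, F k k = 0) ->
  \sum_(k < n) \sum_(l < n | (k < l)%N) F k l
    = 2^-1 *: \sum_(k < n) \sum_(l < n) F k l.
Proof.
move=> two_neq0 F_sym F_diag.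
have split_row k : \sum_(l < n) F k l =
    \sum_(l < n | (k < l)%N) F k l + \sum_(l < n | (l < k)%N) F k l.
  rewrite (bigID (fun l : 'I_n => (k < l)%N)) /=; congr (_ + _).
  rewrite big_mkcond [RHS]big_mkcond; apply: eq_bigr => l _.
  by case: (ltngtP k l) => //= /val_inj ->; rewrite F_diag.
have lower_eq_upper : \sum_(k < n) \sum_(l < n | (l < k)%N) F k l =
                      \sum_(k < n) \sum_(l < n | (k < l)%N) F k l.
  under eq_bigr do rewrite big_mkcond; rewrite exchange_big /=.
  by apply: eq_bigr => k _; rewrite [RHS]big_mkcond; apply: eq_bigr => l _; rewrite F_sym.
rewrite (eq_bigr _ (fun k _ => split_row k)) big_split /= lower_eq_upper.
by rewrite -[X in X + X]scale1r -scalerDl scalerA mulVf ?scale1r.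
Qed.

Section OrthonormalBasis.
Variables (R : rcfType) (n : nat) (b : 'I_n -> 'cV[R]_n).
Hypothesis ob : orthonormal_basis b.
Implicit Types (x y : 'cV[R]_n) (M N : 'M[R]_n).

Definition basis_mx : 'M[R]_n := \matrix_(i, j) b j i 0.

Lemma basis_mx_orthogonal : basis_mx *m basis_mx^T = 1%:M.
Proof.
apply: mulmx1C; apply/matrixP => i j; rewrite !mxE -ob dotvE.
by apply: eq_bigr => k _; rewrite !mxE.
Qed.

Lemma basis_expansion y : y = \sum_i dotv (b i) y *: b i.
Proof.
apply/matrixP => r c; rewrite (ord1 c) summxE.
rewrite -{1}[y]mul1mx -basis_mx_orthogonal -mulmxA mxE; apply: eq_bigr => i _.
rewrite !mxE mulrC dotvE; congr (_ * _); apply: eq_bigr => k _; by rewrite !mxE.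
Qed.

Lemma parseval x y : dotv x y = \sum_i dotv (b i) x * dotv (b i) y.
Proof.
rewrite {1}(basis_expansion y) dotv_sumr; apply: eq_bigr => i _.
by rewrite dotvZr mulrC dotvC.
Qed.

Lemma mx_eq_on_basis M N : (forall m, M *m b m = N *m b m) -> M = N.
Proof.
move=> MN; have {}MN y : M *m y = N *m y.
  by rewrite (basis_expansion y) !mulmx_sumr; apply: eq_bigr => i _;
    rewrite -!scalemxAr MN.
apply/matrixP => i j.
by have := congr1 (fun v : 'cV_n => v i 0) (MN (delta_mx j 0)); rewrite -!colE !mxE.
Qed.

Definition rot (k l : 'I_n) : 'M[R]_n := b l *m (b k)^T - b k *m (b l)^T.

Lemma rotE k l x : rot k l *m x = dotv (b k) x *: b l - dotv (b l) x *: b k.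
Proof. by rewrite /rot mulmxBl -!mulmxA !outer_mulmx. Qed.

Lemma rot_skew k l : (rot k l)^T = - rot k l.
Proof. by rewrite /rot linearB /= !trmx_mul !trmxK opprB. Qed.

Lemma is_Rkl_rot k l M : k != l -> is_Rkl b k l M -> M = rot k l.
Proof.
move=> k_neq_l [Mk Ml Mm]; apply: mx_eq_on_basis => m; rewrite rotE !ob.
have [->|m_neq_k] := eqVneq m k.
  by rewrite Mk eq_sym (negbTE k_neq_l) scale0r subr0 scale1r.
have [->|m_neq_l] := eqVneq m l; first by rewrite Ml scale0r sub0r scale1r.
by rewrite Mm // !scale0r subr0.
Qed.

Lemma rot_double_sum x y :
  \sum_(k < n) \sum_(l < n) dotv (rot k l *m x) y *: (rot k l *m x)
  = 2%:R *: (dotv x x *: y - dotv x y *: x).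
Proof.
have row_sum k : \sum_(l < n) dotv (rot k l *m x) y *: (rot k l *m x) =
    (dotv (b k) x * dotv (b k) x) *: y - dotv x y *: (dotv (b k) x *: b k)
    - (dotv (b k) x * dotv (b k) y) *: x + dotv x x *: (dotv (b k) y *: b k).
  transitivity (\sum_(l < n) ((dotv (b k) x * dotv (b k) x) *: (dotv (b l) y *: b l)
     - (dotv (b l) x * dotv (b l) y) *: (dotv (b k) x *: b k)
     - (dotv (b k) x * dotv (b k) y) *: (dotv (b l) x *: b l)
     + (dotv (b l) x * dotv (b l) x) *: (dotv (b k) y *: b k))).
    apply: eq_bigr => l _; rewrite !rotE dotvBl !dotvZl.
    by apply/matrixP => i j; rewrite !mxE; ring.
  by rewrite !big_split /= !sumrN -!scaler_sumr -!scaler_suml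
    -!basis_expansion -!parseval.
rewrite (eq_bigr _ (fun k _ => row_sum k)) !big_split /= !sumrN.
rewrite -!scaler_sumr -!scaler_suml -!basis_expansion -!parseval.
by apply/matrixP => i j; rewrite !mxE; ring.
Qed.

(* Lagrange-type identity: the R_kl(x) complete x to a tight frame of E^n. *)
Lemma rot_frame x y :
  \sum_(k < n) \sum_(l < n | (k < l)%N) dotv (rot k l *m x) y *: (rot k l *m x)
  = dotv x x *: y - dotv x y *: x.
Proof.
have two_neq0 : (2%:R : R) != 0 by rewrite pnatr_eq0.
rewrite sum_lt_half // ?rot_double_sum ?scalerA ?mulVf ?scale1r //.
- move=> k l; have -> : rot l k = - rot k l by rewrite /rot opprB.
  by rewrite mulNmx -scaleN1r dotvZl scalerA mulrN1 mulN1r opprK.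
- by move=> k; rewrite rotE subrr scaler0.
Qed.

End OrthonormalBasis.

Section Coefficients.
Variables (R : rcfType) (n : nat) (A P : 'M[R]_n) (x : 'cV[R]_n).
Hypothesis P_skew : P^T = - P.

Lemma comm_coef : dotv (comm_mx' A P *m x) x = 2 * dotv (P *m x) (symp A *m x).
Proof.
rewrite /comm_mx' /symp /adj mulmxBl -!mulmxA dotvBl.
rewrite [dotv (A *m _) _]dotv_trmx [dotv (P *m (A *m x)) _]dotv_trmx P_skew.
rewrite mulNmx dotvNr -scalemxAl dotvZr mulmxDl dotvDr (dotvC (A *m x)).
by field.
Qed.

Lemma acomm_coef :
  dotv (acomm_mx A P *m x) x = - 2 * dotv (P *m x) (skewp A *m x).
Proof.
rewrite /acomm_mx /skewp /adj mulmxDl -!mulmxA dotvDl.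
rewrite [dotv (A *m _) _]dotv_trmx [dotv (P *m (A *m x)) _]dotv_trmx P_skew.
rewrite mulNmx dotvNr -scalemxAl dotvZr mulmxBl dotvBr (dotvC (A *m x)).
by field.
Qed.

End Coefficients.

Lemma expform_symp (R : rcfType) (n : nat) (A : 'M[R]_n) (x : 'cV[R]_n) :
  dotv x (symp A *m x) = expform A x.
Proof.
rewrite /symp /adj /expform -scalemxAl dotvZr mulmxDl dotvDr -dotv_trmx.
by rewrite (dotvC x); field.
Qed.

Lemma skewp_skew (R : rcfType) (n : nat) (A : 'M[R]_n) : (skewp A)^T = - skewp A.
Proof. by rewrite /skewp /adj linearZ linearB /= trmxK -scalerN opprB. Qed.

Section Decomposition.
Variables (R : rcfType) (n : nat) (A : 'M[R]_n) (b : 'I_n -> 'cV[R]_n).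
Variable Rm : 'I_n -> 'I_n -> 'M[R]_n.
Hypothesis ob : orthonormal_basis b.
Hypothesis Rm_Rkl : forall k l : 'I_n, (k < l)%N -> is_Rkl b k l (Rm k l).

Lemma Rm_rot (k l : 'I_n) : (k < l)%N -> Rm k l = rot b k l.
Proof.
move=> k_lt_l; have k_neq_l : k != l by rewrite neq_ltn k_lt_l.
exact (is_Rkl_rot ob k_neq_l (Rm_Rkl k_lt_l)).
Qed.

Lemma scaled_frame (x y : 'cV[R]_n) (t : R) (c : 'I_n -> 'I_n -> R) :
  dotv x x = 1 ->
  (forall k l : 'I_n, (k < l)%N -> c k l = dotv (rot b k l *m x) y) ->
  t *: y = dotv x y *: (t *: x)
           + \sum_(k < n) \sum_(l < n | (k < l)%N) c k l *: (Rm k l *m (t *: x)).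
Proof.
move=> x_unit cE; have -> : \sum_(k < n) \sum_(l < n | (k < l)%N)
    c k l *: (Rm k l *m (t *: x)) = t *: (dotv x x *: y - dotv x y *: x).
  rewrite -(rot_frame ob) scaler_sumr; apply: eq_bigr => k _.
  rewrite scaler_sumr; apply: eq_bigr => l k_lt_l.
  by rewrite Rm_rot // cE // -scalemxAr !scalerA mulrC.
by rewrite x_unit scale1r scalerBr scalerA mulrC -scalerA addrC subrK.
Qed.

Lemma symp_decomposition (x : 'cV[R]_n) (t : R) : dotv x x = 1 ->
  symp A *m (t *: x) = expform A x *: (t *: x)
    + 2^-1 *: \sum_(k < n) \sum_(l < n | (k < l)%N)
        dotv (comm_mx' A (Rm k l) *m x) x *: (Rm k l *m (t *: x)).
Proof.
move=> x_unit; rewrite -scalemxAr (scaled_frame (y := symp A *m x)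
  (c := fun k l => 2^-1 * dotv (comm_mx' A (Rm k l) *m x) x) _ x_unit).
  rewrite expform_symp scaler_sumr; congr (_ + _); apply: eq_bigr => k _.
  by rewrite scaler_sumr; apply: eq_bigr => l _; rewrite scalerA.
move=> k l k_lt_l; rewrite Rm_rot // comm_coef ?rot_skew //.
by rewrite mulrA mulVf ?pnatr_eq0 // mul1r.
Qed.

Lemma skewp_decomposition (x : 'cV[R]_n) (t : R) : dotv x x = 1 ->
  skewp A *m (t *: x) =
    - (2^-1 *: \sum_(k < n) \sum_(l < n | (k < l)%N)
        dotv (acomm_mx A (Rm k l) *m x) x *: (Rm k l *m (t *: x))).
Proof.
move=> x_unit; rewrite -scalemxAr (scaled_frame (y := skewp A *m x)
  (c := fun k l => - (2^-1 * dotv (acomm_mx A (Rm k l) *m x) x)) _ x_unit).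
  rewrite dotv_skew ?skewp_skew // scale0r add0r scaler_sumr -sumrN.
  apply: eq_bigr => k _; rewrite scaler_sumr -sumrN.
  by apply: eq_bigr => l _; rewrite scalerA scaleNr.
move=> k l k_lt_l; rewrite Rm_rot // acomm_coef ?rot_skew //.
by rewrite mulrA mulrN mulVf ?pnatr_eq0 // mulN1r opprK.
Qed.

End Decomposition.

Lemma normalize_unit (R : rcfType) (n : nat) (u : 'cV[R]_n) : u != 0 ->
  let uh := (normv u)^-1 *: u in dotv uh uh = 1 /\ normv u *: uh = u.
Proof.
move=> u_neq0 uh; have dot_gt0 := dotv_gt0 u_neq0.
have norm_neq0 : normv u != 0 by rewrite gt_eqF // sqrtr_gt0.
have norm_sq : normv u * normv u = dotv u u by rewrite -expr2 sqr_sqrtr // ltW.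
split; last by rewrite /uh scalerA mulfV ?scale1r.
by rewrite /uh dotvZl dotvZr mulrA -invfM norm_sq mulVf // gt_eqF.
Qed.

Theorem corollary2p12 (R : rcfType) (n : nat) (A : 'M[R]_n)
    (b : 'I_n -> 'cV[R]_n) (Rm : 'I_n -> 'I_n -> 'M[R]_n) (u : 'cV[R]_n) :
  orthonormal_basis b ->
  (forall k l : 'I_n, (k < l)%N -> is_Rkl b k l (Rm k l)) ->
  u != 0 ->
  let uh := (normv u)^-1 *: u in
  symp A *m u =
    expform A uh *: u
    + 2^-1 *: \sum_(k < n) \sum_(l < n | (k < l)%N)
        dotv (comm_mx' A (Rm k l) *m uh) uh *: (Rm k l *m u)
  /\
  skewp A *m u =
    - (2^-1 *: \sum_(k < n) \sum_(l < n | (k < l)%N)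
        dotv (acomm_mx A (Rm k l) *m uh) uh *: (Rm k l *m u)).
Proof.
move=> ob Rm_Rkl u_neq0 uh.
have [uh_unit u_eq] := normalize_unit u_neq0; rewrite -/uh in uh_unit u_eq.
rewrite -u_eq; split.
- exact: (symp_decomposition A ob Rm_Rkl (normv u) uh_unit).
- exact: (skewp_decomposition A ob Rm_Rkl (normv u) uh_unit).
Qed.
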